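(* Let $A$ be a formula in which the bound variables are pairwise distinct and distinct from the free variables. If the sequent $\vdash A$ (with empty context) has a derivation in LJ$^{+}$, then it also has a derivation in LJB.
   Context: Minimal predicate logic: terms $t ::= x \mid f(t_1,\dots,t_n)$, formulas $A ::= P(t_1,\dots,t_n)\mid A\rightarrow A\mid \forall x\,A$. Positivity: atomic formulas are positive and negative; $A\rightarrow B$ is positive (resp. negative) if $A$ is negative (resp. positive) and $B$ positive (resp. negative); $\forall x\,A$ is positive if $A$ is positive, never negative. A sequent is positive if its context formulas are negative and its right-hand side positive; both calculi below are for positive sequents. LJ$^{+}$: sequents $\Gamma\vdash A$ with $\Gamma$ a finite multiset of formulas, formulas modulo $\alpha$-equivalence; rules (L$\rightarrow$) from $\Gamma, A_1\rightarrow\dots\rightarrow A_n\rightarrow P\vdash A_i$ ($i=1..n$, $n\ge0$) infer $\Gamma, A_1\rightarrow\dots\rightarrow A_n\rightarrow P\vdash P$, $P$ atomic; (R$\forall$) from $\Gamma\vdash A$ infer $\Gamma\vdash\forall x\,A$ if $x$ not free in $\Gamma$; (R$\rightarrow$) from $\Gamma,A\vdash B$ infer $\Gamma\vdash A\rightarrow B$. LJB: an LJB-context is a finite multiset of items; an item is a formula or $[\Gamma]_V$ ($V$ a finite set of variables bound by the bracket, $\Gamma$ an LJB-context); $FV([\Gamma]_V)=FV(\Gamma)\setminus V$. Cleaning rules (anywhere in a context, contexts being multisets): $[I,\Gamma]_V\longrightarrow I,[\Gamma]_V$ if $FV(I)\cap V=\emptyset$; $[\ ]_V\longrightarrow\emptyset$;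 $I\,I\longrightarrow I$. This system terminates; $\Gamma{\downarrow}$ denotes the normal form of $\Gamma$ obtained with a fixed arbitrary strategy. LJB rules apply only to LJB-sequents $\Gamma\vdash A$ with $\Gamma$ in normal form and in which, in each formula, bound variables are pairwise distinct and distinct from free variables; formulas are not identified modulo $\alpha$. Rules: (L$\rightarrow$) from $\Gamma'\vdash A_1,\dots,\Gamma'\vdash A_n$ infer $\Gamma\vdash P$, where $\Gamma=\Gamma_1,[\Gamma_2,[\dots\Gamma_{i-1},[\Gamma_i, A_1\rightarrow\dots\rightarrow A_n\rightarrow P]_{V_{i-1}}\dots]_{V_2}]_{V_1}$ ($i\ge1$), $\Gamma'=([\dots[[\Gamma_1]_{V_1},\Gamma_2]_{V_2},\dots,\Gamma_{i-1}]_{V_{i-1}},\Gamma_i,A_1\rightarrow\dots\rightarrow A_n\rightarrow P){\downarrow}$, $P$ atomic with no free variable in $V_1\cup\dots\cup V_{i-1}$; (R$\forall$) from $[\Gamma]_V{\downarrow}\vdash A$ infer $\Gamma\vdash\forall x\,A$, where $V$ is the set of all variables bound in $\forall x\,A$; (R$\rightarrow$) from $(\Gamma,A){\downarrow}\vdash B$ infer $\Gamma\vdash A\rightarrow B$. *)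

From Stdlib Require Import List Permutation Relations.
Import ListNotations.

Inductive term : Type :=
| Var (x : nat)
| Fn (f : nat) (ts : list term).

Inductive form : Type :=
| Atom (p : nat) (ts : list term)
| Imp (A B : form)
| All (x : nat) (A : form).

Inductive FreeT (x : nat) : term -> Prop :=
| FreeT_var : FreeT x (Var x)
| FreeT_fn f ts t : In t ts -> FreeT x t -> FreeT x (Fn f ts).

Fixpoint free (x : nat) (A : form) : Prop :=
  match A with
  | Atom _ ts => exists t, In t ts /\ FreeT x t
  | Imp A B => free x A \/ free x B
  | All y A => x <> y /\ free x A
  end.

Fixpoint bound (A : form) : list nat :=
  match A with
  | Atom _ _ => []
  | Imp A B => bound A ++ bound B
  | All x A => x :: bound A
  end.

Definition bvc (A : form) : Prop :=
  NoDup (bound A) /\ (forall x, In x (bound A) -> ~ free x A).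

Fixpoint pos (A : form) : Prop :=
  match A with
  | Atom _ _ => True
  | Imp A B => neg A /\ pos B
  | All _ A => pos A
  end
with neg (A : form) : Prop :=
  match A with
  | Atom _ _ => True
  | Imp A B => pos A /\ neg B
  | All _ _ => False
  end.

Definition chain (As : list form) (P : form) : form := fold_right Imp P As.

(** * Alpha-equivalence (bound variables compared by binder position). *)
Fixpoint idx (x : nat) (l : list nat) : option nat :=
  match l with
  | [] => None
  | y :: l' => if Nat.eqb x y then Some 0
               else match idx x l' with Some n => Some (S n) | None => None end
  end.

Inductive alphaT (l1 l2 : list nat) : term -> term -> Prop :=
| alphaT_var x y : idx x l1 = idx y l2 -> (idx x l1 = None -> x = y) ->
    alphaT l1 l2 (Var x) (Var y)
| alphaT_fn f ts us : Forall2 (alphaT l1 l2) ts us -> alphaT l1 l2 (Fn f ts) (Fn f us).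

Inductive alphaF : list nat -> list nat -> form -> form -> Prop :=
| alphaF_atom l1 l2 p ts us : Forall2 (alphaT l1 l2) ts us ->
    alphaF l1 l2 (Atom p ts) (Atom p us)
| alphaF_imp l1 l2 A B A' B' : alphaF l1 l2 A A' -> alphaF l1 l2 B B' ->
    alphaF l1 l2 (Imp A B) (Imp A' B')
| alphaF_all l1 l2 x y A B : alphaF (x :: l1) (y :: l2) A B ->
    alphaF l1 l2 (All x A) (All y B).

Definition alpha (A B : form) : Prop := alphaF [] [] A B.

(** * LJ+ : contexts are lists (read as multisets), formulas modulo alpha. *)
Inductive ljp : list form -> form -> Prop :=
| ljp_L Γ As p ts :
    In (chain As (Atom p ts)) Γ ->
    (forall Ai, In Ai As -> ljp Γ Ai) ->
    ljp Γ (Atom p ts)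
| ljp_Rall Γ x A :
    (forall B, In B Γ -> ~ free x B) ->
    ljp Γ A -> ljp Γ (All x A)
| ljp_Rimp Γ A B :
    ljp (A :: Γ) B -> ljp Γ (Imp A B)
| ljp_alpha Γ A A' : alpha A A' -> ljp Γ A -> ljp Γ A'
| ljp_alpha_ctx Γ Γ' A : Forall2 alpha Γ Γ' -> ljp Γ A -> ljp Γ' A.

(** Items: a formula, or a bracket [Γ]_V. *)
Inductive item : Type :=
| IF (A : form)
| IB (V : list nat) (G : list item).

Definition ctx := list item.

(** Equality of items as (nested) multisets, V read as a set. *)
Inductive item_eq : item -> item -> Prop :=
| ieq_F A : item_eq (IF A) (IF A)
| ieq_B V V' G G' G'' :
    (forall x, In x V <-> In x V') ->
    Permutation G' G'' -> Forall2 item_eq G G'' ->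
    item_eq (IB V G) (IB V' G').

Definition ctx_eq (G G' : ctx) : Prop :=
  exists G'', Permutation G' G'' /\ Forall2 item_eq G G''.

Inductive FreeI (x : nat) : item -> Prop :=
| FreeI_F A : free x A -> FreeI x (IF A)
| FreeI_B V G I : ~ In x V -> In I G -> FreeI x I -> FreeI x (IB V G).

Inductive OccF (A : form) : item -> Prop :=
| OccF_F : OccF A (IF A)
| OccF_B V G I : In I G -> OccF A I -> OccF A (IB V G).

Inductive cstep : ctx -> ctx -> Prop :=
| cs_pull G1 G2 V D1 D2 I :
    (forall x, In x V -> ~ FreeI x I) ->
    cstep (G1 ++ IB V (D1 ++ I :: D2) :: G2) (G1 ++ I :: IB V (D1 ++ D2) :: G2)
| cs_empty G1 G2 V :
    cstep (G1 ++ IB V [] :: G2) (G1 ++ G2)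
| cs_dup G1 G2 G3 I J :
    item_eq I J ->
    cstep (G1 ++ I :: G2 ++ J :: G3) (G1 ++ I :: G2 ++ G3)
| cs_in G1 G2 V D D' :
    cstep D D' -> cstep (G1 ++ IB V D :: G2) (G1 ++ IB V D' :: G2).

Definition normal (G : ctx) : Prop := forall G', ~ cstep G G'.

Definition nf_strategy (nf : ctx -> ctx) : Prop :=
  (forall G, exists G', clos_refl_trans ctx cstep G G' /\ ctx_eq G' (nf G)) /\
  (forall G, normal (nf G)) /\
  (forall G G', ctx_eq G G' -> ctx_eq (nf G) (nf G')).

Definition ljb_seq (G : ctx) (A : form) : Prop :=
  normal G /\ (forall I B, In I G -> OccF B I -> bvc B) /\ bvc A.

(** [lfocus acc G F G' W]: G = G1,[G2,[...,[Gi,F]_{V_{i-1}}...]_{V2}]_{V1} (with acc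
    the already reorganised outer part, initially empty), G' is
    [...[[G1]_{V1},G2]_{V2},...,G_{i-1}]_{V_{i-1}},Gi,F  (before normalisation),
    and W = V1 ∪ ... ∪ V_{i-1}. *)
Inductive lfocus : ctx -> ctx -> form -> ctx -> list nat -> Prop :=
| lf_here acc G F Gi :
    Permutation G (IF F :: Gi) ->
    lfocus acc G F (acc ++ Gi ++ [IF F]) []
| lf_deeper acc G F V D Gj res W :
    Permutation G (IB V D :: Gj) ->
    lfocus [IB V (acc ++ Gj)] D F res W ->
    lfocus acc G F res (V ++ W).

Inductive ljb (nf : ctx -> ctx) : ctx -> form -> Prop :=
| ljb_L G As p ts G0 W :
    ljb_seq G (Atom p ts) ->
    lfocus [] G (chain As (Atom p ts)) G0 W ->
    (forall x, In x W -> ~ free x (Atom p ts)) ->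
    (forall Ai, In Ai As -> ljb nf (nf G0) Ai) ->
    ljb nf G (Atom p ts)
| ljb_Rall G x A :
    ljb_seq G (All x A) ->
    ljb nf (nf [IB (bound (All x A)) G]) A ->
    ljb nf G (All x A)
| ljb_Rimp G A B :
    ljb_seq G (Imp A B) ->
    ljb nf (nf (G ++ [IF A])) B ->
    ljb nf G (Imp A B).

(* Simulate an LJ+ derivation of [Γ ⊢ C'] rule by rule by LJB
   derivations of sequents [G ⊢ C0] in which each formula occurrence of [G] and
   the goal [C0] is tagged with renamings [r] exhibiting it as alpha-equivalent,
   after renaming its free variables by [r], to a formula of [Γ] (resp. to [C']).
   The invariant is coherence: two free variables that tags send to the same
   LJ+ variable are syntactically equal and captured by no bracket except those
   enclosing both occurrences.  Cleaning preserves coherence, since pulling items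
   out of brackets and merging duplicates only weaken constraints and merge
   tags; (R∀) preserves it because the LJ+ eigenvariable is fresh and the other
   free variables of [∀x A] are not bound in it; and coherence is exactly what
   (L→) needs: the atom that LJ+ matches with the goal modulo alpha is then
   syntactically the goal, and no bracket crossed to reach the focused formula
   captures its variables. *)

From Stdlib Require Import List Permutation Relations Arith Lia.
Import ListNotations.

Lemma Forall2_In_l {A B} (R : A -> B -> Prop) l1 l2 a :
  Forall2 R l1 l2 -> In a l1 -> exists b, In b l2 /\ R a b.
Proof.
  induction 1 as [|a' b' l1 l2 Hab _ IH]; simpl; [tauto|]. intros [<-|Ha].
  - eauto.
  - destruct (IH Ha) as (b & ? & ?); eauto.
Qed.

Lemma Forall2_In_r {A B} (R : A -> B -> Prop) l1 l2 b :
  Forall2 R l1 l2 -> In b l2 -> exists a, In a l1 /\ R a b.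
Proof.
  induction 1 as [|a' b' l1 l2 Hab _ IH]; simpl; [tauto|]. intros [<-|Hb].
  - eauto.
  - destruct (IH Hb) as (a & ? & ?); eauto.
Qed.

Lemma Forall2_compose {A B C} (P : A -> B -> Prop) (Q : B -> C -> Prop) (R : A -> C -> Prop)
  l1 l2 l3 : Forall2 P l1 l2 -> Forall2 Q l2 l3 ->
  (forall a b c, In a l1 -> P a b -> Q b c -> R a c) -> Forall2 R l1 l3.
Proof.
  intros H; revert l3; induction H; intros l3 H2 HR; inversion H2; subst; constructor.
  - eapply HR; eauto. left; auto.
  - apply IHForall2; auto. intros; eapply HR; eauto. right; auto.
Qed.

Lemma Forall2_and {A B} (P Q : A -> B -> Prop) l1 l2 :
  Forall2 P l1 l2 -> Forall2 Q l1 l2 -> Forall2 (fun a b => P a b /\ Q a b) l1 l2.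
Proof. induction 1; intros H2; inversion H2; subst; constructor; auto. Qed.

Lemma ForallOrdPairs_perm {A} (R : A -> A -> Prop) (Hs : forall a b, R a b -> R b a) l l' :
  Permutation l l' -> ForallOrdPairs R l -> ForallOrdPairs R l'.
Proof.
  induction 1 as [|x l l' HP IH|x y l|l l' l'' HP1 IH1 HP2 IH2]; intros HF; auto.
  - inversion HF as [|a l0 HA HB]; subst. constructor; auto. eapply Permutation_Forall; eauto.
  - inversion HF as [|a l0 HA HB]; subst. inversion HB as [|a' l1 HC HD]; subst.
    inversion HA; subst. constructor; [constructor; auto|constructor; auto].
Qed.

Lemma ForallOrdPairs_app {A} (R : A -> A -> Prop) l1 l2 :
  ForallOrdPairs R (l1 ++ l2) <-> ForallOrdPairs R l1 /\ ForallOrdPairs R l2 /\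
    (forall a b, In a l1 -> In b l2 -> R a b).
Proof.
  induction l1 as [|a l1 IH]; simpl.
  - split; [intros; repeat split; auto; [constructor|tauto]|tauto].
  - split.
    + intros H; inversion H as [|? ? Ha Hl]; subst. apply IH in Hl as (H3 & H4 & H5).
      apply Forall_app in Ha as [H6 H7]. rewrite Forall_forall in H7.
      split; [constructor; auto|split; auto]. intros x y [<-|Hx] Hy; auto.
    + intros (H1 & H2 & H3). inversion H1; subst. constructor.
      * apply Forall_app; split; auto. rewrite Forall_forall; intros; apply H3; auto.
      * apply IH; repeat split; auto.
Qed.

Lemma map_eq_app_cons {A B} (f : A -> B) T G1 x G2 : map f T = G1 ++ x :: G2 ->
  exists T1 a T2, T = T1 ++ a :: T2 /\ map f T1 = G1 /\ f a = x /\ map f T2 = G2.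
Proof.
  intros H. apply map_eq_app in H as (T1 & T' & -> & H1 & H2).
  apply map_eq_cons in H2 as (a & T2 & -> & H3 & H4). exists T1, a, T2; auto.
Qed.

(** * Alpha-equivalence up to a renaming of free variables *)

Fixpoint term_nested_ind (P : term -> Prop) (Hv : forall x, P (Var x))
  (Hf : forall f ts, (forall t, In t ts -> P t) -> P (Fn f ts)) (t : term) : P t :=
  match t with
  | Var x => Hv x
  | Fn f ts => Hf f ts ((fix go (l : list term) : forall u, In u l -> P u :=
       match l with
       | [] => fun u H => False_ind _ H
       | c :: l' => fun u H => match H with
                   | or_introl E => eq_ind c P (term_nested_ind P Hv Hf c) u E
                   | or_intror H' => go l' u H' end
       end) ts)
  end.

(* [alphaF_ren r [] [] A B]: [A] is alpha-equivalent to [B] with each free [y]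
   of [B] replaced by [r y]. *)
Inductive alphaT_ren (r : nat -> nat) (l1 l2 : list nat) : term -> term -> Prop :=
| alphaT_ren_var x y : idx x l1 = idx y l2 -> (idx x l1 = None -> x = r y) ->
    alphaT_ren r l1 l2 (Var x) (Var y)
| alphaT_ren_fn f ts us : Forall2 (alphaT_ren r l1 l2) ts us ->
    alphaT_ren r l1 l2 (Fn f ts) (Fn f us).

Inductive alphaF_ren (r : nat -> nat) : list nat -> list nat -> form -> form -> Prop :=
| alphaF_ren_atom l1 l2 p ts us : Forall2 (alphaT_ren r l1 l2) ts us ->
    alphaF_ren r l1 l2 (Atom p ts) (Atom p us)
| alphaF_ren_imp l1 l2 A B A' B' : alphaF_ren r l1 l2 A A' -> alphaF_ren r l1 l2 B B' ->
    alphaF_ren r l1 l2 (Imp A B) (Imp A' B')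
| alphaF_ren_all l1 l2 x y A B : alphaF_ren r (x :: l1) (y :: l2) A B ->
    alphaF_ren r l1 l2 (All x A) (All y B).

Lemma alphaT_ren_comp r l1 l2 l3 t u w :
  alphaT l1 l2 t u -> alphaT_ren r l2 l3 u w -> alphaT_ren r l1 l3 t w.
Proof.
  revert l1 l2 l3 u w.
  induction t as [x|f ts IH] using term_nested_ind; intros l1 l2 l3 u w H1 H2.
  - inversion H1 as [x' y E1 E2|]; subst. inversion H2 as [y' z E3 E4|]; subst.
    constructor; [congruence|].
    intro E. rewrite (E2 E). apply E4. congruence.
  - inversion H1; subst. inversion H2; subst. constructor.
    eapply Forall2_compose; eauto.
Qed.

Lemma alphaF_ren_comp r l1 l2 A B :
  alphaF l1 l2 A B -> forall l3 C, alphaF_ren r l2 l3 B C -> alphaF_ren r l1 l3 A C.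
Proof.
  induction 1; intros l3 C HC; inversion HC; subst; constructor; eauto.
  eapply Forall2_compose; eauto. intros; eapply alphaT_ren_comp; eauto.
Qed.

Lemma alphaT_ren_id l t : alphaT_ren (fun v => v) l l t t.
Proof.
  induction t as [x|f ts IH] using term_nested_ind; constructor; auto.
  induction ts; constructor.
  - apply IH; left; auto.
  - apply IHts; intros; apply IH; right; auto.
Qed.

Lemma alphaF_ren_id A : forall l, alphaF_ren (fun v => v) l l A A.
Proof.
  induction A; intros; constructor; auto.
  induction ts; constructor; auto. apply alphaT_ren_id.
Qed.

Lemma idx_Some_In x l n : idx x l = Some n -> In x l /\ n < length l.
Proof.
  revert n; induction l as [|y l IH]; simpl; intros n H; [discriminate|].
  destruct (Nat.eqb_spec x y).
  - subst. inversion H; subst; split; auto; lia.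
  - destruct (idx x l) eqn:E; inversion H; subst. destruct (IH _ eq_refl). split; auto; lia.
Qed.

Lemma idx_None x l : idx x l = None <-> ~ In x l.
Proof.
  split.
  - intros H Hin. induction l as [|y l IH]; [destruct Hin|]. simpl in H.
    destruct (Nat.eqb_spec x y); [discriminate|].
    destruct (idx x l); [discriminate|]. destruct Hin; [congruence|auto].
  - induction l as [|y l IH]; simpl; intros H; auto.
    destruct (Nat.eqb_spec x y); [subst; exfalso; auto|]. rewrite IH; auto.
Qed.

Lemma idx_app_single x l a : idx x (l ++ [a]) =
  match idx x l with
  | Some n => Some n
  | None => if Nat.eqb x a then Some (length l) else None
  end.
Proof.
  induction l as [|y l IH]; simpl; [destruct (Nat.eqb x a); auto|].
  destruct (Nat.eqb x y); auto. rewrite IH. destruct (idx x l); auto. destruct (Nat.eqb x a); auto.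
Qed.

Definition ren_upd (r : nat -> nat) (b a : nat) : nat -> nat :=
  fun v => if Nat.eqb v b then a else r v.

(* [idx] lists binders innermost first, so [a] and [b] are the outermost ones. *)
Lemma alphaT_ren_bind r l1 l2 a b t u : length l1 = length l2 ->
  alphaT_ren r (l1 ++ [a]) (l2 ++ [b]) t u -> alphaT_ren (ren_upd r b a) l1 l2 t u.
Proof.
  intros Hlen. revert u. induction t as [x|f ts IH] using term_nested_ind; intros u H.
  - inversion H as [x' y H2 H3|]; subst.
    rewrite !idx_app_single in H2. rewrite idx_app_single in H3.
    constructor.
    + destruct (idx x l1) eqn:E1, (idx y l2) eqn:E2; auto.
      * destruct (Nat.eqb y b); inversion H2; subst. apply idx_Some_In in E1. lia.
      * destruct (Nat.eqb x a); inversion H2; subst. apply idx_Some_In in E2. lia.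
    + intros E1. rewrite E1 in H2, H3. unfold ren_upd.
      destruct (idx y l2) eqn:E2.
      * destruct (Nat.eqb x a); inversion H2; subst. apply idx_Some_In in E2. lia.
      * destruct (Nat.eqb_spec x a), (Nat.eqb_spec y b); subst; try discriminate; auto.
  - inversion H as [|f' ts' us H2]; subst. constructor. induction H2; constructor.
    + apply IH; auto. left; auto.
    + apply IHForall2. intros; apply IH; auto. right; auto. constructor; auto.
Qed.

Lemma alphaF_ren_bind r A B : forall l1 l2 a b, length l1 = length l2 ->
  alphaF_ren r (l1 ++ [a]) (l2 ++ [b]) A B -> alphaF_ren (ren_upd r b a) l1 l2 A B.
Proof.
  revert B; induction A; intros B l1 l2 a b Hl H; inversion H; subst; constructor.
  - eapply Forall2_impl; [|eassumption]. intros; apply alphaT_ren_bind; auto.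
  - eapply IHA1; eauto.
  - eapply IHA2; eauto.
  - apply (IHA _ (x :: l1) (y :: l2) a b); simpl; auto.
Qed.

Lemma alphaT_ren_free r l1 l2 t u v : alphaT_ren r l1 l2 t u -> FreeT v u -> ~ In v l2 ->
  FreeT (r v) t /\ ~ In (r v) l1.
Proof.
  revert u. induction t as [x|f ts IH] using term_nested_ind; intros u H Hf Hn.
  - inversion H as [x' y E1 E2|]; subst. inversion Hf; subst.
    apply idx_None in Hn. rewrite Hn in E1. rewrite E2 by auto.
    split; [constructor|]. apply idx_None. rewrite <- (E2 E1); auto.
  - inversion H as [|f' ts' us E1]; subst.
    inversion Hf as [|f'' ts'' t' Hin Ht']; subst.
    destruct (Forall2_In_r _ _ _ _ E1 Hin) as (t0 & Ht0 & Ha).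
    destruct (IH t0 Ht0 t' Ha Ht' Hn). split; auto. econstructor; eauto.
Qed.

Lemma alphaF_ren_free r l1 l2 A B v : alphaF_ren r l1 l2 A B -> free v B -> ~ In v l2 ->
  free (r v) A /\ ~ In (r v) l1.
Proof.
  intros H; revert v; induction H as [l1 l2 p ts us H|l1 l2 A B A' B' _ IHA _ IHB|l1 l2 x y A B _ IH];
    simpl; intros v Hf Hn.
  - destruct Hf as (u & Hu & Hfu). destruct (Forall2_In_r _ _ _ _ H Hu) as (t & Ht & Ha).
    destruct (alphaT_ren_free _ _ _ _ _ _ Ha Hfu Hn). split; eauto.
  - destruct Hf as [Hf|Hf]; [destruct (IHA v Hf Hn)|destruct (IHB v Hf Hn)]; auto.
  - destruct Hf as [Hne Hf]. destruct (IH v Hf) as [H1 H2].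
    + simpl; intros [|]; auto.
    + simpl in H2. split; [split|]; auto.
Qed.

Lemma alphaT_ren_inj r1 r2 t u1 u2 : alphaT_ren r1 [] [] t u1 -> alphaT_ren r2 [] [] t u2 ->
  (forall v1 v2, FreeT v1 u1 -> FreeT v2 u2 -> r1 v1 = r2 v2 -> v1 = v2) -> u1 = u2.
Proof.
  revert u1 u2. induction t as [x|f ts IH] using term_nested_ind; intros u1 u2 H1 H2 Hi.
  - inversion H1 as [x' y1 E1 E2|]; subst; inversion H2 as [x'' y2 E3 E4|]; subst.
    simpl in *. f_equal. apply Hi; try constructor. rewrite <- E2, <- E4 by auto. auto.
  - inversion H1 as [|f' ts' us1 E1]; subst; inversion H2 as [|f'' ts'' us2 E2]; subst.
    f_equal. clear H1 H2. revert us1 us2 E1 E2 Hi.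
    induction ts; intros us1 us2 E1 E2 Hi; inversion E1; subst; inversion E2; subst; auto.
    f_equal.
    + apply (IH a); [left; auto|auto|auto|].
      intros; apply Hi; auto; econstructor; eauto; left; auto.
    + apply IHts; auto.
      * intros t Ht; apply IH; right; auto.
      * intros v1 v2 F1 F2; inversion F1; inversion F2; subst; apply Hi;
          econstructor; eauto; right; auto.
Qed.

Lemma alphaT_ren_agree r1 r2 t u x :
  alphaT_ren r1 [] [] t u -> alphaT_ren r2 [] [] t u -> FreeT x u -> r1 x = r2 x.
Proof.
  revert t. induction u as [y|f us IH] using term_nested_ind; intros t H1 H2 Hf.
  - inversion H1 as [x1 y1 E1 E2|]; subst; inversion H2 as [x2 y2 E3 E4|]; subst.
    inversion Hf; subst. rewrite <- E2, <- E4; auto.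
  - inversion H1 as [|f1 ts1 us1 E1]; subst; inversion H2 as [|f2 ts2 us2 E2]; subst.
    inversion Hf as [|f3 ts3 t3 Hin Ht3]; subst.
    destruct (Forall2_In_r _ _ _ _ (Forall2_and _ _ _ _ E1 E2) Hin) as (t' & Ht' & Ha1 & Ha2).
    eapply IH; eauto.
Qed.

Lemma Forall2_alphaT_ren_inj r1 r2 ts us1 us2 :
  Forall2 (alphaT_ren r1 [] []) ts us1 -> Forall2 (alphaT_ren r2 [] []) ts us2 ->
  (forall v1 v2, (exists u, In u us1 /\ FreeT v1 u) -> (exists u, In u us2 /\ FreeT v2 u) ->
     r1 v1 = r2 v2 -> v1 = v2) ->
  us1 = us2.
Proof.
  intros H1; revert us2; induction H1; intros us2 H2 Hi; inversion H2; subst; auto.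
  f_equal.
  - eapply alphaT_ren_inj; eauto. intros; apply Hi; eauto; eexists; split; eauto; left; auto.
  - apply IHForall2; auto.
    intros v1 v2 (u1 & ? & ?) (u2 & ? & ?); apply Hi; eexists; split; eauto; right; auto.
Qed.

Lemma Forall2_alphaT_ren_agree r1 r2 ts us x :
  Forall2 (alphaT_ren r1 [] []) ts us -> Forall2 (alphaT_ren r2 [] []) ts us ->
  (exists u, In u us /\ FreeT x u) -> r1 x = r2 x.
Proof.
  intros H1 H2 (u & Hu & Hf).
  destruct (Forall2_In_r _ _ _ _ (Forall2_and _ _ _ _ H1 H2) Hu) as (t & _ & Ha1 & Ha2).
  eapply alphaT_ren_agree; eauto.
Qed.

Lemma alphaF_ren_chain r As' P' F : alphaF_ren r [] [] (chain As' P') F ->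
  exists As P, F = chain As P /\ Forall2 (alphaF_ren r [] []) As' As /\ alphaF_ren r [] [] P' P.
Proof.
  revert F; induction As' as [|A As' IH]; simpl; intros F H.
  - exists [], F; simpl; auto.
  - inversion H as [|l1 l2 A0 B0 A1 B1 HA HB|]; subst.
    destruct (IH _ HB) as (As & P & -> & H1 & H2).
    exists (A1 :: As), P; simpl; auto.
Qed.

Lemma free_chain_concl v As P : free v P -> free v (chain As P).
Proof. induction As; simpl; auto. Qed.

Lemma free_chain_hyp v As P A : In A As -> free v A -> free v (chain As P).
Proof. induction As; simpl; intros Hin Hf; [contradiction|]. destruct Hin as [<-|H]; auto. Qed.

Lemma bvc_imp A B : bvc (Imp A B) -> bvc A /\ bvc B.
Proof.
  unfold bvc; simpl. intros [Hn Hf].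
  pose proof (NoDup_app_remove_r _ _ Hn); pose proof (NoDup_app_remove_l _ _ Hn).
  split; split; auto; intros x Hx Hfx; apply (Hf x); simpl; auto; apply in_or_app; auto.
Qed.

Lemma bvc_all x A : bvc (All x A) -> bvc A.
Proof.
  unfold bvc; simpl. intros [Hn Hf]. inversion Hn; subst. split; auto.
  intros y Hy Hfy. apply (Hf y); auto. split; auto. intros ->; auto.
Qed.

Lemma bvc_chain As P A : bvc (chain As P) -> In A As -> bvc A.
Proof.
  induction As; simpl; [tauto|]. intros H [<-|Hin]; apply bvc_imp in H; destruct H; auto.
Qed.

Lemma bvc_free_not_bound A v : bvc A -> free v A -> ~ In v (bound A).
Proof. intros [_ H] Hf Hin. apply (H v); auto. Qed.

(** * Annotated contexts *)

(* An LJB context in which every formula carries the renamings [r] under which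
   it stands for formulas of the simulated LJ+ context; merging duplicates
   with the cleaning rule accumulates renamings. *)
Inductive aitem : Type :=
| AF (F : form) (rs : list (nat -> nat))
| AB (V : list nat) (T : list aitem).

Fixpoint aitem_nested_ind (P : aitem -> Prop) (HF : forall F rs, P (AF F rs))
  (HB : forall V T, (forall a, In a T -> P a) -> P (AB V T)) (a : aitem) : P a :=
  match a with
  | AF F rs => HF F rs
  | AB V T => HB V T ((fix go (l : list aitem) : forall b, In b l -> P b :=
       match l with
       | [] => fun b H => False_ind _ H
       | c :: l' => fun b H => match H with
                   | or_introl E => eq_ind c P (aitem_nested_ind P HF HB c) b E
                   | or_intror H' => go l' b H' end
       end) T)
  end.

Fixpoint erase (a : aitem) : item :=
  match a with AF F _ => IF F | AB V T => IB V (map erase T) end.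

(* A formula with one of its renamings and the variables of the brackets
   around it. *)
Inductive view := mkview (F : form) (r : nat -> nat) (W : list nat).

Definition view_form (x : view) : form := let 'mkview F _ _ := x in F.

Definition under (V : list nat) (x : view) : view :=
  let 'mkview F r W := x in mkview F r (V ++ W).

Fixpoint views (a : aitem) : list view :=
  match a with
  | AF F rs => map (fun r => mkview F r []) rs
  | AB V T => map (under V) (flat_map views T)
  end.

Definition ctx_views (T : list aitem) : list view := flat_map views T.

Definition views_agree (x y : view) : Prop :=
  let 'mkview F1 r1 W1 := x in let 'mkview F2 r2 W2 := y in
  forall v1 v2, free v1 F1 -> free v2 F2 -> r1 v1 = r2 v2 ->
    v1 = v2 /\ ~ In v1 W1 /\ ~ In v1 W2.

Definition items_agree (a b : aitem) : Prop :=
  forall x y, In x (views a) -> In y (views b) -> views_agree x y.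

(* Two occurrences are compared relative to the innermost bracket containing
   both: the brackets they share do not count. *)
Inductive coherent_item : aitem -> Prop :=
| coherent_AF F rs : items_agree (AF F rs) (AF F rs) -> coherent_item (AF F rs)
| coherent_AB V T : (forall a, In a T -> coherent_item a) ->
    ForallOrdPairs items_agree T -> coherent_item (AB V T).

Definition coherent (T : list aitem) : Prop :=
  (forall a, In a T -> coherent_item a) /\ ForallOrdPairs items_agree T.

(* Agreement with [y] implies agreement with [x]. *)
Definition view_below (x y : view) : Prop :=
  let 'mkview F1 r1 W1 := x in let 'mkview F2 r2 W2 := y in
  r1 = r2 /\ forall v, free v F1 -> free v F2 /\ (In v W1 -> In v W2).

Definition view_refines (x y : view) : Prop := view_below x y /\ view_form x = view_form y.

Definition backed (L' L : list view) : Prop :=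
  forall x, In x L' -> exists y, In y L /\ view_refines x y.

Definition kept (L L' : list view) : Prop :=
  forall F r W, In (mkview F r W) L -> exists W', In (mkview F r W') L'.

Lemma in_views_AB x V T :
  In x (views (AB V T)) <-> exists x0 a, In a T /\ In x0 (views a) /\ x = under V x0.
Proof.
  simpl. rewrite in_map_iff. split.
  - intros (x0 & <- & H). apply in_flat_map in H as (a & ? & ?). eauto.
  - intros (x0 & a & ? & ? & ->). exists x0; split; auto. apply in_flat_map; eauto.
Qed.

Lemma in_ctx_views x T : In x (ctx_views T) <-> exists a, In a T /\ In x (views a).
Proof. apply in_flat_map. Qed.

Lemma ctx_views_cons a T : ctx_views (a :: T) = views a ++ ctx_views T.
Proof. reflexivity. Qed.

Lemma ctx_views_single a : ctx_views [a] = views a.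
Proof. apply app_nil_r. Qed.

Lemma ctx_views_app T1 T2 : ctx_views (T1 ++ T2) = ctx_views T1 ++ ctx_views T2.
Proof. apply flat_map_app. Qed.

Lemma ctx_views_perm T T' : Permutation T T' -> Permutation (ctx_views T) (ctx_views T').
Proof. apply Permutation_flat_map. Qed.

Lemma in_under F r W V L : In (mkview F r W) L -> In (mkview F r (V ++ W)) (map (under V) L).
Proof. intros H. apply in_map_iff. exists (mkview F r W); auto. Qed.

Lemma in_under_inv F r W V L : In (mkview F r W) (map (under V) L) -> exists W0, In (mkview F r W0) L.
Proof.
  intros H. apply in_map_iff in H as ([F0 r0 W0] & E & H). simpl in E. inversion E; subst. eauto.
Qed.

Lemma views_agree_sym x y : views_agree x y -> views_agree y x.
Proof.
  destruct x as [F1 r1 W1], y as [F2 r2 W2]; simpl. intros H v1 v2 H1 H2 E.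
  destruct (H v2 v1 H2 H1 (eq_sym E)) as (-> & ? & ?); auto.
Qed.

Lemma items_agree_sym a b : items_agree a b -> items_agree b a.
Proof. intros H x y Hx Hy; apply views_agree_sym; auto. Qed.

Lemma views_agree_below x y x' y' :
  views_agree x y -> view_below x' x -> view_below y' y -> views_agree x' y'.
Proof.
  destruct x as [F1 r1 W1], y as [F2 r2 W2], x' as [F1' r1' W1'], y' as [F2' r2' W2']; simpl.
  intros H (-> & H1) (-> & H2) v1 v2 Hf1 Hf2 E.
  destruct (H1 v1 Hf1) as [Hf1' HW1]. destruct (H2 v2 Hf2) as [Hf2' HW2].
  destruct (H v1 v2 Hf1' Hf2' E) as (<- & N1 & N2). split; auto.
Qed.

Lemma views_agree_refines x y x' y' :
  views_agree x y -> view_refines x' x -> view_refines y' y -> views_agree x' y'.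
Proof. intros H [H1 _] [H2 _]; eapply views_agree_below; eauto. Qed.

Lemma views_agree_under_swap V x y : views_agree (under V y) x -> views_agree (under V x) y.
Proof.
  destruct x as [Fx rx Wx], y as [Fy ry Wy]; simpl. intros H v1 v2 H1 H2 E.
  destruct (H v2 v1 H2 H1 (eq_sym E)) as (-> & N1 & N2). split; [auto|split].
  - intros Hi; apply in_app_or in Hi as [Hi|Hi]; auto. apply N1; apply in_or_app; auto.
  - intros Hi; apply N1; apply in_or_app; auto.
Qed.

Lemma view_refines_refl x : view_refines x x.
Proof. destruct x; split; simpl; auto. Qed.

Lemma view_refines_trans x y z : view_refines x y -> view_refines y z -> view_refines x z.
Proof.
  destruct x, y, z; unfold view_refines; simpl.
  intros ((-> & H1) & E1) ((-> & H2) & E2). split; [split|congruence]; auto.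
  intros v Hv. destruct (H1 v Hv). destruct (H2 v); auto.
Qed.

Lemma view_refines_under V' V x y :
  incl V' V -> view_refines x y -> view_refines (under V' x) (under V y).
Proof.
  destruct x, y; unfold view_refines; simpl. intros HV ((-> & H) & E).
  split; [split|auto]; auto. intros v Hv; destruct (H v Hv); split; auto.
  intros Hi; apply in_app_or in Hi; apply in_or_app. destruct Hi; auto.
Qed.

Lemma view_refines_under_r V x : view_refines x (under V x).
Proof.
  destruct x; unfold view_refines; simpl; split; [split|]; auto.
  intros; split; auto. intros; apply in_or_app; auto.
Qed.

Lemma items_agree_backed_by a' b' L1 L2 : backed (views a') L1 -> backed (views b') L2 ->
  (forall x y, In x L1 -> In y L2 -> views_agree x y) -> items_agree a' b'.
Proof.
  intros H1 H2 H x y Hx Hy.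
  destruct (H1 x Hx) as (x0 & ? & ?). destruct (H2 y Hy) as (y0 & ? & ?).
  eapply views_agree_refines; eauto.
Qed.

Lemma backed_incl L' L : incl L' L -> backed L' L.
Proof. intros H x Hx; exists x; split; auto; apply view_refines_refl. Qed.

Lemma kept_incl L L' : incl L L' -> kept L L'.
Proof. intros H F r W Hx; exists W; auto. Qed.

Lemma backed_trans L1 L2 L3 : backed L1 L2 -> backed L2 L3 -> backed L1 L3.
Proof.
  intros H1 H2 x Hx. destruct (H1 x Hx) as (y & Hy & S1). destruct (H2 y Hy) as (z & Hz & S2).
  exists z; split; auto; eapply view_refines_trans; eauto.
Qed.

Lemma kept_trans L1 L2 L3 : kept L1 L2 -> kept L2 L3 -> kept L1 L3.
Proof. intros H1 H2 F r W Hx. destruct (H1 F r W Hx) as (W' & Hy). eapply H2; eauto. Qed.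

Lemma backed_app L1 L2 M1 M2 : backed L1 M1 -> backed L2 M2 -> backed (L1 ++ L2) (M1 ++ M2).
Proof.
  intros H1 H2 x Hx. apply in_app_or in Hx as [Hx|Hx].
  - destruct (H1 x Hx) as (y & ? & ?); exists y; split; auto; apply in_or_app; auto.
  - destruct (H2 x Hx) as (y & ? & ?); exists y; split; auto; apply in_or_app; auto.
Qed.

Lemma kept_app L1 L2 M1 M2 : kept L1 M1 -> kept L2 M2 -> kept (L1 ++ L2) (M1 ++ M2).
Proof.
  intros H1 H2 F r W Hx. apply in_app_or in Hx as [Hx|Hx].
  - destruct (H1 F r W Hx) as (W' & ?); exists W'; apply in_or_app; auto.
  - destruct (H2 F r W Hx) as (W' & ?); exists W'; apply in_or_app; auto.
Qed.

Lemma backed_AB V' V TD' TD : incl V' V -> backed (ctx_views TD') (ctx_views TD) ->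
  backed (views (AB V' TD')) (views (AB V TD)).
Proof.
  intros HV HB x Hx. simpl in Hx. apply in_map_iff in Hx as (x0 & <- & Hx0).
  destruct (HB x0 Hx0) as (y0 & Hy0 & S). exists (under V y0); split.
  - simpl; apply in_map; auto.
  - apply view_refines_under; auto.
Qed.

Lemma kept_AB V' V TD' TD : kept (ctx_views TD) (ctx_views TD') ->
  kept (views (AB V TD)) (views (AB V' TD')).
Proof.
  intros HC F r W Hx. simpl in Hx. apply in_map_iff in Hx as ([F0 r0 W0] & E & Hx0).
  simpl in E; inversion E; subst. destruct (HC F r W0 Hx0) as (W' & HW').
  exists (V' ++ W'). apply in_under; auto.
Qed.

Lemma coherent_perm T T' : Permutation T T' -> coherent T -> coherent T'.
Proof.
  intros HP [H1 H2]; split.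
  - intros a Ha; apply H1; eapply Permutation_in; [symmetry|]; eauto.
  - eapply ForallOrdPairs_perm; eauto. apply items_agree_sym.
Qed.

Lemma coherent_app T1 T2 : coherent (T1 ++ T2) <-> coherent T1 /\ coherent T2 /\
  (forall a b, In a T1 -> In b T2 -> items_agree a b).
Proof.
  unfold coherent. rewrite ForallOrdPairs_app. split.
  - intros (H1 & H2 & H3 & H4). repeat split; auto; intros; apply H1; apply in_or_app; auto.
  - intros ((H1 & H2) & (H3 & H4) & H5). repeat split; auto.
    intros a Ha; apply in_app_or in Ha as [|]; auto.
Qed.

Lemma coherent_cons a T : coherent (a :: T) <->
  coherent_item a /\ (forall b, In b T -> items_agree a b) /\ coherent T.
Proof.
  unfold coherent; split.
  - intros (H1 & H2). inversion H2; subst. rewrite Forall_forall in *.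
    repeat split; auto. apply H1; left; auto. intros; apply H1; right; auto.
  - intros (H1 & H2 & H3 & H4). split.
    + intros b [<-|Hb]; auto.
    + constructor; auto. rewrite Forall_forall; auto.
Qed.

Lemma coherent_nil : coherent [].
Proof. split; [intros _ []|constructor]. Qed.

Lemma coherent_single a : coherent [a] <-> coherent_item a.
Proof.
  rewrite coherent_cons. split; [tauto|].
  intros H; split; [auto|split; [intros _ []|apply coherent_nil]].
Qed.

Lemma coherent_AB_iff V T : coherent_item (AB V T) <-> coherent T.
Proof. split; [intros H; inversion H; subst; split; auto|intros [H1 H2]; constructor; auto]. Qed.

Lemma coherent_AF_iff F rs : coherent_item (AF F rs) <-> items_agree (AF F rs) (AF F rs).
Proof. split; [intros H; inversion H; subst; auto|intros; constructor; auto]. Qed.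

(** * Reannotation along cleaning steps *)

Definition reannot (T T' : list aitem) : Prop :=
  coherent T' /\ backed (ctx_views T') (ctx_views T) /\ kept (ctx_views T) (ctx_views T').

Lemma reannot_refl T : coherent T -> reannot T T.
Proof. intros H; split; [|split]; auto; [apply backed_incl|apply kept_incl]; apply incl_refl. Qed.

Lemma reannot_trans T1 T2 T3 : reannot T1 T2 -> reannot T2 T3 -> reannot T1 T3.
Proof.
  intros (A1 & B1 & C1) (A2 & B2 & C2). split; [|split]; auto.
  - eapply backed_trans; eauto.
  - eapply kept_trans; eauto.
Qed.

Lemma reannot_perm T T' T0 T0' :
  Permutation T T0 -> Permutation T' T0' -> reannot T0 T0' -> reannot T T'.
Proof.
  intros P1 P2 (H1 & H2 & H3).
  pose proof (ctx_views_perm _ _ P1) as Q1. pose proof (ctx_views_perm _ _ P2) as Q2.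
  split; [|split].
  - eapply coherent_perm; [symmetry|]; eauto.
  - eapply backed_trans; [|eapply backed_trans; [apply H2|]]; apply backed_incl;
      intros x; apply Permutation_in; [|symmetry]; auto.
  - eapply kept_trans; [|eapply kept_trans; [apply H3|]]; apply kept_incl;
      intros x; apply Permutation_in; [|symmetry]; auto.
Qed.

Lemma reannot_app S S' R R' :
  coherent (S ++ R) -> reannot S S' -> reannot R R' -> reannot (S ++ R) (S' ++ R').
Proof.
  intros HC (CS & BS & KS) (CR & BR & KR). apply coherent_app in HC as (_ & _ & X).
  split; [|split; rewrite !ctx_views_app].
  - apply coherent_app; split; [auto|split; [auto|]].
    intros a' b' Ha' Hb'.
    apply (items_agree_backed_by a' b' (ctx_views S) (ctx_views R)).
    + eapply backed_trans; [apply backed_incl|apply BS].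
      intros x Hx; apply in_ctx_views; eauto.
    + eapply backed_trans; [apply backed_incl|apply BR].
      intros x Hx; apply in_ctx_views; eauto.
    + intros x y Hx Hy. apply in_ctx_views in Hx as (a & Ha & Hx).
      apply in_ctx_views in Hy as (b & Hb & Hy). apply (X a b); auto.
  - apply backed_app; auto.
  - apply kept_app; auto.
Qed.

Lemma reannot_middle S S' T1 T2 : (coherent S -> reannot S S') ->
  coherent (T1 ++ S ++ T2) -> reannot (T1 ++ S ++ T2) (T1 ++ S' ++ T2).
Proof.
  intros HS HC.
  assert (HC' : coherent (S ++ T1 ++ T2)) by (eapply coherent_perm; [apply Permutation_app_swap_app|auto]).
  eapply reannot_perm; [apply Permutation_app_swap_app..|].
  pose proof HC' as HC''. apply coherent_app in HC'' as (CS & CT & _).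
  apply reannot_app; auto. apply reannot_refl; auto.
Qed.

Lemma reannot_empty_bracket V : reannot [AB V []] [].
Proof.
  split; [apply coherent_nil|split]; [intros _ []|]. apply kept_incl; intros x [].
Qed.

Lemma reannot_bracket V V' TD TD' : incl V' V -> (coherent TD -> reannot TD TD') ->
  coherent [AB V TD] -> reannot [AB V TD] [AB V' TD'].
Proof.
  intros HV H HC. apply coherent_single, coherent_AB_iff in HC.
  destruct (H HC) as (C & B & K). split; [|split; rewrite !ctx_views_single].
  - apply coherent_single, coherent_AB_iff; auto.
  - apply backed_AB; auto.
  - apply kept_AB; auto.
Qed.

Lemma FreeI_view a F r W v :
  In (mkview F r W) (views a) -> free v F -> ~ In v W -> FreeI v (erase a).
Proof.
  revert F r W. induction a as [F0 rs|V T IH] using aitem_nested_ind; intros F r W Hx Hf Hn.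
  - simpl in Hx. apply in_map_iff in Hx as (r' & E & _). inversion E; subst. constructor; auto.
  - apply in_views_AB in Hx as ([F1 r1 W1] & a & Ha & Hx0 & E).
    simpl in E. inversion E; subst. simpl. econstructor.
    + intro; apply Hn; apply in_or_app; auto.
    + apply in_map; eauto.
    + eapply IH; eauto. intro; apply Hn; apply in_or_app; auto.
Qed.

(* The pulled item has no free variable in [V], so losing [V] from its views
   costs nothing. *)
Lemma reannot_pull V aI TD : (forall x, In x V -> ~ FreeI x (erase aI)) ->
  coherent [AB V (aI :: TD)] -> reannot [AB V (aI :: TD)] [aI; AB V TD].
Proof.
  intros HV HC. apply coherent_single, coherent_AB_iff, coherent_cons in HC as (CI & AI & CT).
  split; [|split].
  - apply coherent_cons; split; [|split]; auto.
    + intros b [<-|[]] x y Hx Hy. apply in_views_AB in Hy as (y0 & t & Ht & Hy0 & ->).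
      pose proof (AI t Ht x y0 Hx Hy0) as Hc.
      destruct x as [F1 r1 W1], y0 as [F2 r2 W2]; simpl in *.
      intros v1 v2 Hf1 Hf2 E. destruct (Hc v1 v2 Hf1 Hf2 E) as (<- & N1 & N2).
      split; [|split]; auto. intros Hi; apply in_app_or in Hi as [Hi|Hi]; auto.
      apply (HV v1 Hi). eapply FreeI_view; eauto.
    + apply coherent_single, coherent_AB_iff; auto.
  - rewrite (ctx_views_cons aI), !ctx_views_single. intros x Hx. apply in_app_or in Hx as [Hx|Hx].
    + exists (under V x); split; [|apply view_refines_under_r].
      apply in_map, in_or_app; auto.
    + exists x; split; [|apply view_refines_refl].
      apply in_map_iff in Hx as (x0 & <- & Hx0). apply in_map, in_or_app; auto.
  - rewrite (ctx_views_cons aI), !ctx_views_single. intros F r W Hx.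
    apply in_map_iff in Hx as ([F0 r0 W0] & E & Hx0). simpl in E; inversion E; subst.
    apply in_app_or in Hx0 as [Hx0|Hx0].
    + exists W0. apply in_or_app; auto.
    + exists (V ++ W0). apply in_or_app; right. apply in_under; auto.
Qed.

Lemma reannot_join_AF F rs rs' :
  coherent [AF F rs; AF F rs'] -> reannot [AF F rs; AF F rs'] [AF F (rs ++ rs')].
Proof.
  intros HC.
  assert (HV : views (AF F (rs ++ rs')) = views (AF F rs) ++ views (AF F rs')) by apply map_app.
  split; [|split; rewrite (ctx_views_cons (AF F rs)), !ctx_views_single, HV;
             [apply backed_incl|apply kept_incl]; apply incl_refl].
  apply coherent_cons in HC as (C1 & A12 & C2).
  apply coherent_single, coherent_AF_iff in C2. apply coherent_AF_iff in C1.
  specialize (A12 _ (or_introl eq_refl)).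
  apply coherent_single, coherent_AF_iff. intros x y Hx Hy. rewrite HV in Hx, Hy.
  apply in_app_or in Hx as [Hx|Hx]; apply in_app_or in Hy as [Hy|Hy]; auto.
  apply views_agree_sym; auto.
Qed.

Lemma reannot_join_brackets V V' T T' T'' : incl V V' -> Permutation T' T'' ->
  coherent (T ++ T'') -> reannot [AB V T; AB V' T'] [AB V (T ++ T'')].
Proof.
  intros HV HP HC. split; [|split; rewrite (ctx_views_cons (AB V T)), !ctx_views_single].
  - apply coherent_single, coherent_AB_iff; auto.
  - intros x Hx. apply in_views_AB in Hx as (x0 & a & Ha & Hx0 & ->).
    apply in_app_or in Ha as [Ha|Ha].
    + exists (under V x0); split; [|apply view_refines_refl].
      apply in_or_app; left. apply in_views_AB; eauto.
    + exists (under V' x0); split; [|apply view_refines_under; [auto|apply view_refines_refl]].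
      apply in_or_app; right. apply in_views_AB. exists x0, a; split; auto.
      eapply Permutation_in; [symmetry|]; eauto.
  - intros F r W Hx. apply in_app_or in Hx as [Hx|Hx].
    + exists W. apply in_views_AB in Hx as (x0 & a & Ha & Hx0 & E).
      apply in_views_AB. exists x0, a; split; [apply in_or_app|]; auto.
    + apply in_views_AB in Hx as ([F0 r0 W0] & a & Ha & Hx0 & E). simpl in E; injection E as <- <- _.
      exists (V ++ W0). apply in_views_AB. exists (mkview F r W0), a.
      split; [|auto]. apply in_or_app; right. eapply Permutation_in; eauto.
Qed.

Definition mergeable (a : aitem) : Prop :=
  forall b, item_eq (erase a) (erase b) -> coherent [a; b] ->
  exists m, erase m = erase a /\ reannot [a; b] [m].

Lemma merge_ctx T : (forall a, In a T -> mergeable a) -> forall Tb,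
  Forall2 item_eq (map erase T) (map erase Tb) -> coherent (T ++ Tb) ->
  exists M, map erase M = map erase T /\ reannot (T ++ Tb) M.
Proof.
  induction T as [|a T IH]; intros HM Tb HF HC.
  - destruct Tb; [|inversion HF]. exists []; split; auto. apply reannot_refl, coherent_nil.
  - destruct Tb as [|b Tb]; inversion HF as [|? ? ? ? Hab HF']; subst.
    assert (P : Permutation ((a :: T) ++ b :: Tb) ([a; b] ++ T ++ Tb))
      by (simpl; constructor; symmetry; apply Permutation_middle).
    pose proof (coherent_perm _ _ P HC) as HC'.
    pose proof HC' as HC''. apply coherent_app in HC'' as (Cab & CT & _).
    destruct (HM a (or_introl eq_refl) b Hab Cab) as (m & Em & Rm).
    destruct (IH (fun a' H => HM a' (or_intror H)) Tb HF' CT) as (M & EM & RM).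
    exists (m :: M). split; [simpl; congruence|].
    eapply reannot_perm; [exact P|reflexivity|]. apply (reannot_app _ [m]); auto.
Qed.

Lemma merge_item a : mergeable a.
Proof.
  induction a as [F rs|V T IH] using aitem_nested_ind;
    intros [F2 rs'|V2 T2] Hab HC; simpl in Hab; inversion Hab as [|? ? ? ? G'' HV HP HF]; subst.
  - exists (AF F2 (rs ++ rs')). split; auto. apply reannot_join_AF; auto.
  - destruct (Permutation_map_inv erase T2 (Permutation_sym HP)) as (T3 & -> & HP3).
    apply coherent_cons in HC as (C1 & A12 & C2).
    apply coherent_AB_iff in C1. apply coherent_single, coherent_AB_iff in C2.
    specialize (A12 _ (or_introl eq_refl)).
    assert (C : coherent (T ++ T3)).
    { apply coherent_app; split; [auto|split; [eapply coherent_perm; eauto|]].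
      intros t t' Ht Ht' x y Hx Hy.
      eapply views_agree_refines; [apply (A12 (under V x) (under V2 y))|
                                   apply view_refines_under_r..];
        apply in_views_AB; eauto.
      exists y, t'; split; auto. eapply Permutation_in; [symmetry|]; eauto. }
    destruct (merge_ctx T IH T3 HF C) as (M & EM & RM).
    exists (AB V M). split; [simpl; congruence|].
    eapply reannot_trans; [apply (reannot_join_brackets V V2 T T2 T3); auto|].
    + intros x; apply HV.
    + apply reannot_bracket; [apply incl_refl|auto|].
      apply coherent_single, coherent_AB_iff; auto.
Qed.

Lemma erase_eq_IB a V D : erase a = IB V D -> exists TD, a = AB V TD /\ map erase TD = D.
Proof. destruct a; simpl; intros H; inversion H; subst; eauto. Qed.

Lemma coherent_middle T1 S T2 : coherent (T1 ++ S ++ T2) -> coherent S.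
Proof. intros H. apply coherent_app in H as (_ & H & _). apply coherent_app in H; tauto. Qed.

Lemma reannot_dup T1 aI T2 aJ T3 : item_eq (erase aI) (erase aJ) ->
  coherent (T1 ++ aI :: T2 ++ aJ :: T3) ->
  exists m, erase m = erase aI /\ reannot (T1 ++ aI :: T2 ++ aJ :: T3) (T1 ++ m :: T2 ++ T3).
Proof.
  intros Hij CT.
  assert (P : Permutation (T1 ++ aI :: T2 ++ aJ :: T3) ([aI; aJ] ++ T1 ++ T2 ++ T3)).
  { etransitivity; [symmetry; apply Permutation_middle|]. apply perm_skip.
    rewrite app_assoc. etransitivity; [symmetry; apply Permutation_middle|].
    rewrite app_assoc; reflexivity. }
  pose proof (coherent_perm _ _ P CT) as CT'.
  pose proof CT' as CT''. apply coherent_app in CT'' as (Cab & CR & _).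
  destruct (merge_item aI aJ Hij Cab) as (m & Em & Rm).
  exists m. split; auto.
  eapply reannot_perm; [exact P|symmetry; apply Permutation_middle|].
  apply (reannot_app _ [m]); auto. apply reannot_refl; auto.
Qed.

Lemma cstep_reannot G G' : cstep G G' -> forall T, map erase T = G -> coherent T ->
  exists T', map erase T' = G' /\ reannot T T'.
Proof.
  induction 1 as [G1 G2 V D1 D2 I HV|G1 G2 V|G1 G2 G3 I J Hij|G1 G2 V D D' Hs IH];
    intros T ET CT.
  - apply map_eq_app_cons in ET as (T1 & a & T2 & -> & <- & Ea & <-).
    apply erase_eq_IB in Ea as (TD & -> & ED).
    apply map_eq_app_cons in ED as (TD1 & aI & TD2 & -> & <- & <- & <-).
    exists (T1 ++ aI :: AB V (TD1 ++ TD2) :: T2).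
    split; [rewrite map_app; simpl; rewrite map_app; reflexivity|].
    apply (reannot_middle [_] [_; _]); auto. intros HC.
    assert (R : reannot [AB V (TD1 ++ aI :: TD2)] [AB V (aI :: TD1 ++ TD2)]).
    { apply reannot_bracket; auto using incl_refl. intros C.
      eapply reannot_perm; [reflexivity|apply Permutation_middle|apply reannot_refl; auto]. }
    eapply reannot_trans; [exact R|]. apply reannot_pull; auto. apply R.
  - apply map_eq_app_cons in ET as (T1 & a & T2 & -> & <- & Ea & <-).
    apply erase_eq_IB in Ea as ([|] & -> & ED); [|discriminate].
    exists (T1 ++ T2). split; [rewrite map_app; reflexivity|].
    apply (reannot_middle [_] []); auto. intros _; apply reannot_empty_bracket.
  - apply map_eq_app_cons in ET as (T1 & aI & T2' & -> & <- & <- & E2).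
    apply map_eq_app_cons in E2 as (T2 & aJ & T3 & -> & <- & <- & <-).
    destruct (reannot_dup T1 aI T2 aJ T3 Hij CT) as (m & Em & Rm).
    exists (T1 ++ m :: T2 ++ T3). split; [rewrite !map_app; simpl; rewrite map_app, Em|]; auto.
  - apply map_eq_app_cons in ET as (T1 & a & T2 & -> & <- & Ea & <-).
    apply erase_eq_IB in Ea as (TD & -> & ED).
    pose proof (coherent_middle T1 [_] T2 CT) as C.
    apply coherent_single, coherent_AB_iff in C.
    destruct (IH TD ED C) as (TD' & ED' & R).
    exists (T1 ++ AB V TD' :: T2). split; [rewrite map_app; simpl; rewrite ED'; reflexivity|].
    apply (reannot_middle [_] [_]); auto. intros _.
    apply reannot_bracket; auto using incl_refl. apply coherent_single, coherent_AB_iff; auto.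
Qed.

Lemma cleaning_reannot G G' : clos_refl_trans ctx cstep G G' ->
  forall T, map erase T = G -> coherent T -> exists T', map erase T' = G' /\ reannot T T'.
Proof.
  induction 1 as [G G' Hs|G|G1 G2 G3 H1 IH1 H2 IH2]; intros T ET CT.
  - eapply cstep_reannot; eauto.
  - exists T; split; auto. apply reannot_refl; auto.
  - destruct (IH1 T ET CT) as (T2 & E2 & R2). destruct (IH2 T2 E2 (proj1 R2)) as (T3 & E3 & R3).
    exists T3; split; auto. eapply reannot_trans; eauto.
Qed.

Definition item_eq_reannotable (a : aitem) : Prop :=
  forall i, item_eq (erase a) i -> coherent_item a ->
  exists a', erase a' = i /\ reannot [a] [a'].

Lemma item_eq_reannot_ctx T : (forall a, In a T -> item_eq_reannotable a) ->
  forall G, Forall2 item_eq (map erase T) G -> coherent T ->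
  exists T', map erase T' = G /\ reannot T T'.
Proof.
  induction T as [|a T IH]; intros HI G HF CT; inversion HF as [|? i ? G' Hi HF']; subst.
  - exists []; split; auto. apply reannot_refl, coherent_nil.
  - pose proof CT as CT'. apply coherent_cons in CT' as (Ca & _ & CT').
    destruct (HI a (or_introl eq_refl) i Hi Ca) as (a' & Ea & Ra).
    destruct (IH (fun b Hb => HI b (or_intror Hb)) G' HF' CT') as (T' & E' & R').
    exists (a' :: T'). split; [simpl; congruence|].
    apply (reannot_app [a] [a']); auto.
Qed.

Lemma item_eq_reannot a : item_eq_reannotable a.
Proof.
  induction a as [F rs|V T IH] using aitem_nested_ind; intros i Hi Ca;
    simpl in Hi; inversion Hi as [|? V' ? G' G'' HV HP HF]; subst.
  - exists (AF F rs); split; auto. apply reannot_refl, coherent_single; auto.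
  - apply coherent_AB_iff in Ca.
    destruct (item_eq_reannot_ctx T IH G'' HF Ca) as (T3 & <- & R3).
    destruct (Permutation_map_inv erase T3 HP) as (T4 & -> & HP4).
    exists (AB V' T4). split; auto.
    apply reannot_bracket; [intros x; apply HV| |apply coherent_single, coherent_AB_iff; auto].
    intros _. eapply reannot_perm; [reflexivity|symmetry; exact HP4|exact R3].
Qed.

Lemma ctx_eq_reannot G N T : ctx_eq G N -> map erase T = G -> coherent T ->
  exists T', map erase T' = N /\ reannot T T'.
Proof.
  intros (G'' & HP & HF) <- CT.
  destruct (item_eq_reannot_ctx T (fun a _ => item_eq_reannot a) G'' HF CT) as (T3 & <- & R3).
  destruct (Permutation_map_inv erase T3 HP) as (T4 & -> & HP4).
  exists T4. split; auto. eapply reannot_perm; [reflexivity|symmetry; exact HP4|exact R3].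
Qed.

Definition OccCtx (B : form) (G : ctx) : Prop := exists I, In I G /\ OccF B I.

Definition ctx_bvc (G : ctx) : Prop := forall B, OccCtx B G -> bvc B.

Lemma ctx_bvc_In G : ctx_bvc G -> forall I B, In I G -> OccF B I -> bvc B.
Proof. intros H I B HI HB. apply H. exists I; auto. Qed.

Lemma OccCtx_app B G1 G2 : OccCtx B (G1 ++ G2) <-> OccCtx B G1 \/ OccCtx B G2.
Proof.
  unfold OccCtx; split.
  - intros (I & H & HO). apply in_app_or in H as [|]; eauto.
  - intros [(I & H & HO)|(I & H & HO)]; exists I; split; auto; apply in_or_app; auto.
Qed.

Lemma OccCtx_cons B I G : OccCtx B (I :: G) <-> OccF B I \/ OccCtx B G.
Proof.
  unfold OccCtx; split.
  - intros (J & [<-|H] & HO); eauto.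
  - intros [H|(J & H & HO)]; [exists I; split; [left|]|exists J; split; [right|]]; auto.
Qed.

Lemma OccCtx_perm B G G' : Permutation G G' -> OccCtx B G' -> OccCtx B G.
Proof.
  intros HP (I & HI & HO). exists I; split; auto. eapply Permutation_in; [symmetry|]; eauto.
Qed.

Lemma OccF_IB_iff B V G : OccF B (IB V G) <-> OccCtx B G.
Proof.
  split.
  - intros H; inversion H; subst; unfold OccCtx; eauto.
  - intros (I & H & HO); econstructor; eauto.
Qed.

Lemma item_eq_occ I J B : item_eq I J -> OccF B J -> OccF B I.
Proof.
  intros H HO; revert I H; induction HO as [|V G I' Hin HO IH]; intros I0 H.
  - inversion H; subst; constructor.
  - inversion H as [|V0 V' G0 G' G'' HV HP HF]; subst.
    destruct (Forall2_In_r _ _ _ _ HF (Permutation_in _ HP Hin)) as (I1 & HI1 & Hq).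
    econstructor; eauto.
Qed.

Lemma cstep_occ G G' B : cstep G G' -> OccCtx B G' -> OccCtx B G.
Proof.
  induction 1; intros HO;
    repeat (rewrite OccCtx_app in * || rewrite OccCtx_cons in * || rewrite OccF_IB_iff in * );
    tauto.
Qed.

Lemma cleaning_occ G G' B : clos_refl_trans ctx cstep G G' -> OccCtx B G' -> OccCtx B G.
Proof. induction 1; eauto using cstep_occ. Qed.

Lemma ctx_eq_occ G N B : ctx_eq G N -> OccCtx B N -> OccCtx B G.
Proof.
  intros (G'' & HP & HF) (I & HI & HO).
  destruct (Forall2_In_r _ _ _ _ HF (Permutation_in _ HP HI)) as (I1 & HI1 & Hq).
  exists I1; split; auto. eapply item_eq_occ; eauto.
Qed.

Lemma lfocus_occ acc G F res W B :
  lfocus acc G F res W -> OccCtx B res -> OccCtx B acc \/ OccCtx B G.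
Proof.
  induction 1 as [acc G F Gi HP|acc G F V D Gj res W HP HL IH]; intros H.
  - rewrite !OccCtx_app, OccCtx_cons in H.
    destruct H as [H|[H|[H|(? & [] & _)]]]; auto;
      right; eapply OccCtx_perm; eauto; apply OccCtx_cons; auto.
  - destruct (IH H) as [H1|H1].
    + rewrite OccCtx_cons, OccF_IB_iff, OccCtx_app in H1.
      destruct H1 as [[H1|H1]|(? & [] & _)]; auto.
      right; eapply OccCtx_perm; eauto; apply OccCtx_cons; auto.
    + right; eapply OccCtx_perm; eauto; apply OccCtx_cons; left; apply OccF_IB_iff; auto.
Qed.

Lemma view_occ a F r W : In (mkview F r W) (views a) -> OccF F (erase a).
Proof.
  revert F r W. induction a as [F0 rs|V T IH] using aitem_nested_ind; intros F r W H.
  - simpl in H. apply in_map_iff in H as (r' & E & _). inversion E; subst; constructor.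
  - apply in_views_AB in H as ([F1 r1 W1] & a & Ha & Hx & E). simpl in E; inversion E; subst.
    simpl. econstructor; [apply in_map; eauto|]. eapply IH; eauto.
Qed.

Lemma ctx_views_occ T F r W : In (mkview F r W) (ctx_views T) -> OccCtx F (map erase T).
Proof.
  intros H. apply in_ctx_views in H as (a & Ha & H). exists (erase a); split; [apply in_map; auto|].
  eapply view_occ; eauto.
Qed.

(** * Focusing *)

Definition same_pairs (T T' : list aitem) : Prop :=
  kept (ctx_views T) (ctx_views T') /\ kept (ctx_views T') (ctx_views T).

Lemma same_pairs_perm T T' : Permutation T T' -> same_pairs T T'.
Proof.
  intros HP; split; apply kept_incl; intros x; apply Permutation_in;
    [|symmetry]; apply ctx_views_perm; auto.
Qed.

Lemma same_pairs_trans T1 T2 T3 : same_pairs T1 T2 -> same_pairs T2 T3 -> same_pairs T1 T3.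
Proof. intros [A B] [C D]; split; eapply kept_trans; eauto. Qed.

Lemma kept_reroot V TD R :
  kept (ctx_views (AB V TD :: R)) (ctx_views (AB V R :: TD)).
Proof.
  rewrite !ctx_views_cons. intros F r W Hx. apply in_app_or in Hx as [Hx|Hx].
  - destruct (in_under_inv _ _ _ _ _ Hx) as (W0 & HW0). exists W0. apply in_or_app; auto.
  - exists (V ++ W). apply in_or_app; left. apply in_under; auto.
Qed.

Lemma same_pairs_reroot V TD R : same_pairs (AB V TD :: R) (AB V R :: TD).
Proof. split; apply kept_reroot. Qed.

(* Moving the outer context into a bracket placed inside the inner one only
   changes which brackets are shared; agreement is relative to them. *)
Lemma coherent_reroot V TD R : coherent (AB V TD :: R) -> coherent (AB V R :: TD).
Proof.
  intros H. apply coherent_cons in H as (H1 & H2 & H3). apply coherent_AB_iff in H1.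
  apply coherent_cons; split; [apply coherent_AB_iff; auto|split; auto].
  intros t Ht x y Hx Hy. apply in_views_AB in Hx as (x0 & r & Hr & Hx0 & ->).
  apply views_agree_under_swap. apply (H2 r Hr); auto. apply in_views_AB; eauto.
Qed.

Lemma lfocus_of_view a : forall acc R G F r W, Permutation G (erase a :: map erase R) ->
  In (mkview F r W) (views a) -> coherent (acc ++ a :: R) ->
  exists T0 rs, lfocus (map erase acc) G F (map erase T0) W /\ coherent T0 /\
    In (AF F rs) T0 /\ In r rs /\ same_pairs (acc ++ a :: R) T0.
Proof.
  induction a as [F' rs|V TD IH] using aitem_nested_ind; intros acc R G F r W HP Hv HC.
  - simpl in Hv. apply in_map_iff in Hv as (r' & E & Hr). inversion E; subst.
    assert (P : Permutation (acc ++ AF F rs :: R) (acc ++ R ++ [AF F rs]))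
      by (apply Permutation_app_head, Permutation_cons_append).
    exists (acc ++ R ++ [AF F rs]), rs. split; [rewrite !map_app; apply lf_here; auto|].
    split; [eapply coherent_perm; eauto|]. split; [|split; [auto|apply same_pairs_perm; auto]].
    apply in_or_app; right; apply in_or_app; right; left; auto.
  - apply in_views_AB in Hv as ([F1 r1 W1] & a1 & Ha1 & Hx1 & E). simpl in E. inversion E; subst.
    destruct (in_split _ _ Ha1) as (TD1 & TD2 & ->).
    assert (P1 : Permutation (acc ++ AB V (TD1 ++ a1 :: TD2) :: R) (AB V (TD1 ++ a1 :: TD2) :: acc ++ R))
      by (symmetry; apply Permutation_middle).
    assert (P2 : Permutation (AB V (acc ++ R) :: TD1 ++ a1 :: TD2) ([AB V (acc ++ R)] ++ a1 :: TD1 ++ TD2))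
      by (apply perm_skip; symmetry; apply Permutation_middle).
    assert (HC' : coherent ([AB V (acc ++ R)] ++ a1 :: TD1 ++ TD2))
      by (eapply coherent_perm; [exact P2|apply coherent_reroot, (coherent_perm _ _ P1 HC)]).
    assert (HP' : Permutation (map erase (TD1 ++ a1 :: TD2)) (erase a1 :: map erase (TD1 ++ TD2)))
      by (rewrite !map_app; symmetry; apply Permutation_middle).
    destruct (IH a1 Ha1 [AB V (acc ++ R)] (TD1 ++ TD2) _ F1 r1 W1 HP' Hx1 HC')
      as (T0 & rs & HL & C0 & I0 & R0 & S0).
    exists T0, rs. split; [|split; [auto|split; [auto|split; [auto|]]]].
    + eapply lf_deeper; [apply HP|]. simpl in HL. rewrite map_app in HL. exact HL.
    + eapply same_pairs_trans; [apply same_pairs_perm, P1|].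
      eapply same_pairs_trans; [apply same_pairs_reroot|].
      eapply same_pairs_trans; [apply same_pairs_perm, P2|exact S0].
Qed.

(** * Simulating LJ+ in LJB *)

Lemma backed_kept L' L : backed L' L -> kept L' L.
Proof.
  intros H F r W Hx. destruct (H _ Hx) as ([F0 r0 W0] & Hy & (E1 & _) & E2).
  simpl in E1, E2; subst. eauto.
Qed.

Lemma coherent_add_weaker C rs T A r : coherent (AF C rs :: T) -> In r rs ->
  (forall v, free v A -> free v C) -> coherent (AF A [r] :: AF C rs :: T).
Proof.
  intros HC Hr HA. pose proof HC as HC'. apply coherent_cons in HC' as (C1 & I1 & _).
  apply coherent_AF_iff in C1.
  assert (Hw : view_below (mkview A r []) (mkview C r [])) by (simpl; split; auto).
  assert (Hc : In (mkview C r []) (views (AF C rs))) by (apply in_map_iff; eauto).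
  apply coherent_cons; split; [|split]; auto.
  - apply coherent_AF_iff. intros x y [<-|[]] [<-|[]].
    eapply views_agree_below; [apply C1; eauto|exact Hw|exact Hw].
  - intros b Hb x y [<-|[]] Hy.
    assert (Hy' : view_below y y) by (destruct y; simpl; split; auto).
    destruct Hb as [<-|Hb]; (eapply views_agree_below; [|exact Hw|exact Hy']);
      [apply C1|apply (I1 b Hb)]; auto.
Qed.

Lemma coherent_add_weaker_In C rs T A r : coherent T -> In (AF C rs) T -> In r rs ->
  (forall v, free v A -> free v C) -> coherent (AF A [r] :: T).
Proof.
  intros HC HIn Hr HA. destruct (in_split _ _ HIn) as (T1 & T2 & ->).
  assert (P : Permutation (AF C rs :: T1 ++ T2) (T1 ++ AF C rs :: T2)) by apply Permutation_middle.
  eapply coherent_perm; [apply perm_skip, P|].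
  apply coherent_add_weaker; auto. eapply coherent_perm; [symmetry; apply P|auto].
Qed.

Lemma coherent_goal_atom p us0 r0 T r W As us ts :
  coherent (AF (Atom p us0) [r0] :: T) -> In (mkview (chain As (Atom p us)) r W) (ctx_views T) ->
  Forall2 (alphaT_ren r0 [] []) ts us0 -> Forall2 (alphaT_ren r [] []) ts us ->
  us0 = us /\ (forall x, In x W -> ~ free x (Atom p us)).
Proof.
  intros CT Hv H0 H1. apply coherent_cons in CT as (_ & I0 & _).
  apply in_ctx_views in Hv as (a & Ha & Hv).
  assert (Hc : views_agree (mkview (Atom p us0) r0 []) (mkview (chain As (Atom p us)) r W))
    by (apply (I0 a Ha); simpl; auto).
  simpl in Hc.
  assert (Eu : us0 = us).
  { eapply Forall2_alphaT_ren_inj; eauto. intros v1 v2 Hv1 Hv2 E.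
    apply (Hc v1 v2); auto. apply free_chain_concl; auto. }
  subst us0. split; auto. intros x Hx Hf.
  assert (E : r0 x = r x) by (eapply Forall2_alphaT_ren_agree; eauto).
  destruct (Hc x x Hf (free_chain_concl _ _ _ Hf) E) as (_ & _ & N). auto.
Qed.

Definition represents (T : list aitem) (Γ : list form) : Prop :=
  (forall F', In F' Γ -> exists F r W, In (mkview F r W) (ctx_views T) /\ alphaF_ren r [] [] F' F) /\
  (forall F r W, In (mkview F r W) (ctx_views T) -> exists F', In F' Γ /\ alphaF_ren r [] [] F' F).

Lemma represents_kept T T' Γ : represents T Γ ->
  kept (ctx_views T) (ctx_views T') -> kept (ctx_views T') (ctx_views T) -> represents T' Γ.
Proof.
  intros [HCov HBk] K1 K2. split.
  - intros F' HF'. destruct (HCov F' HF') as (F & r & W & Hv & Ha).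
    destruct (K1 F r W Hv) as (W' & Hv'). eauto.
  - intros F r W Hv. destruct (K2 F r W Hv) as (W' & Hv'). eauto.
Qed.

Lemma represents_same_pairs T T' Γ : represents T Γ -> same_pairs T T' -> represents T' Γ.
Proof. intros H [K1 K2]. eapply represents_kept; eauto. Qed.

Lemma same_pairs_bracket V T : same_pairs T [AB V T].
Proof.
  split; rewrite ctx_views_single; intros F r W Hx.
  - exists (V ++ W). apply in_under; auto.
  - eapply in_under_inv; eauto.
Qed.

Lemma represents_snoc T Γ A' A r : represents T Γ -> alphaF_ren r [] [] A' A ->
  represents (T ++ [AF A [r]]) (A' :: Γ).
Proof.
  intros [HCov HBk] HA. split; rewrite ctx_views_app, ctx_views_single.
  - intros F' [<-|HF'].
    + exists A, r, []. split; auto. apply in_or_app; right; left; auto.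
    + destruct (HCov F' HF') as (F1 & r1 & W1 & Hv1 & Ha1).
      exists F1, r1, W1. split; auto. apply in_or_app; auto.
  - intros F1 r1 W1 Hv1. apply in_app_or in Hv1 as [Hv1|[E|[]]].
    + destruct (HBk _ _ _ Hv1) as (F' & ? & ?). exists F'; split; [right|]; auto.
    + inversion E; subst. exists A'; split; [left|]; auto.
Qed.

Lemma represents_alpha T Γ Γ' : Forall2 alpha Γ Γ' -> represents T Γ' -> represents T Γ.
Proof.
  intros HF [HCov HBk]. split.
  - intros F HFin. destruct (Forall2_In_l _ _ _ _ HF HFin) as (F'' & HF'' & Hal).
    destruct (HCov F'' HF'') as (F1 & r1 & W1 & Hv1 & Ha1).
    exists F1, r1, W1. split; auto. eapply alphaF_ren_comp; eauto.
  - intros F1 r1 W1 Hv1. destruct (HBk F1 r1 W1 Hv1) as (F'' & HF'' & Ha1).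
    destruct (Forall2_In_r _ _ _ _ HF HF'') as (F & HFin & Hal).
    exists F; split; auto. eapply alphaF_ren_comp; eauto.
Qed.

Lemma coherent_Rimp A B r0 T :
  coherent (AF (Imp A B) [r0] :: T) -> coherent (AF B [r0] :: T ++ [AF A [r0]]).
Proof.
  intros HC.
  pose proof (coherent_add_weaker _ _ _ A r0 HC (or_introl eq_refl) (fun v Hv => or_introl Hv)) as C1.
  assert (C2 : coherent (AF (Imp A B) [r0] :: AF A [r0] :: T)) by (eapply coherent_perm; [apply perm_swap|auto]).
  pose proof (coherent_add_weaker _ _ _ B r0 C2 (or_introl eq_refl) (fun v Hv => or_intror Hv)) as C3.
  assert (C4 : coherent (AF (Imp A B) [r0] :: AF B [r0] :: AF A [r0] :: T))
    by (eapply coherent_perm; [apply perm_swap|auto]).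
  apply coherent_cons in C4 as (_ & _ & C5).
  eapply coherent_perm; [|apply C5]. apply perm_skip, Permutation_cons_append.
Qed.

(* In the new goal [A] the bound [x] stands for the eigenvariable [x'], which is
   fresh for the LJ+ context; the other free variables of [A] are those of
   [All x A], which escape the bracket by the bound-variable convention. *)
Lemma coherent_Rall Γ T x x' A A'' r0 :
  alphaF_ren r0 [] [] (All x' A'') (All x A) -> bvc (All x A) ->
  (forall B, In B Γ -> ~ free x' B) -> represents T Γ ->
  coherent (AF (All x A) [r0] :: T) ->
  coherent [AF A [ren_upd r0 x x']; AB (bound (All x A)) T].
Proof.
  intros HA Hbvc Hfr [_ HBk] CT.
  assert (Hfx : forall v, v <> x -> free v A -> r0 v <> x').
  { intros v Hne Hv E. destruct (alphaF_ren_free _ _ _ _ _ v HA) as [H1 _]; simpl; auto.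
    destruct H1; auto. }
  apply coherent_cons in CT as (C1 & I1 & CT). apply coherent_AF_iff in C1.
  assert (Cself : views_agree (mkview (All x A) r0 []) (mkview (All x A) r0 []))
    by (apply C1; simpl; auto).
  apply coherent_cons; split; [|split].
  - apply coherent_AF_iff. intros u w [<-|[]] [<-|[]] v1 v2 H1 H2 E.
    split; [|simpl; auto]. unfold ren_upd in E.
    destruct (Nat.eqb_spec v1 x), (Nat.eqb_spec v2 x); subst; auto.
    + exfalso; apply (Hfx v2); auto.
    + exfalso; apply (Hfx v1); auto.
    + destruct (Cself v1 v2) as (? & _); simpl; auto.
  - intros b [<-|[]] u w [<-|[]] Hw.
    apply in_views_AB in Hw as ([F r W] & t & Ht & Hw0 & ->).
    intros v1 v2 H1 H2 E. unfold ren_upd in E. destruct (Nat.eqb_spec v1 x) as [->|Hne].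
    + exfalso. destruct (HBk F r W) as (F' & HF' & HaF'); [apply in_ctx_views; eauto|].
      destruct (alphaF_ren_free _ _ _ _ _ v2 HaF' H2) as [H3 _]; [simpl; auto|].
      apply (Hfr F' HF'). rewrite E; auto.
    + assert (Hc : views_agree (mkview (All x A) r0 []) (mkview F r W))
        by (apply (I1 t Ht); simpl; auto).
      destruct (Hc v1 v2) as (<- & _ & N); simpl; auto.
      split; [auto|split; [auto|]]. intros Hi.
      change (In v1 (bound (All x A) ++ W)) in Hi. apply in_app_or in Hi as [Hi|Hi]; auto.
      apply (bvc_free_not_bound _ v1 Hbvc); simpl; auto.
  - apply coherent_single, coherent_AB_iff; auto.
Qed.

Lemma normal_nil : normal [].
Proof.
  intros G' H. inversion H; subst;
    match goal with E : _ ++ _ = [] |- _ => apply app_eq_nil in E as [_ E]; discriminate end.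
Qed.

Section Simulation.

Variable nf : ctx -> ctx.
Hypothesis nf_spec : nf_strategy nf.

Lemma nf_reannot T : coherent T -> exists T', map erase T' = nf (map erase T) /\ reannot T T'.
Proof.
  intros CT. destruct (proj1 nf_spec (map erase T)) as (G' & Hrt & Heq).
  destruct (cleaning_reannot _ _ Hrt T eq_refl CT) as (T1 & E1 & R1).
  destruct (ctx_eq_reannot _ _ _ Heq E1 (proj1 R1)) as (T2 & E2 & R2).
  exists T2; split; auto. eapply reannot_trans; eauto.
Qed.

Lemma nf_ctx_bvc G : ctx_bvc G -> ctx_bvc (nf G).
Proof.
  intros H B HB. destruct (proj1 nf_spec G) as (G' & Hrt & Heq).
  apply H. eapply cleaning_occ; eauto. eapply ctx_eq_occ; eauto.
Qed.

Definition simulated (Γ : list form) (C' : form) (G : ctx) (C0 : form) : Prop :=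
  exists T r0, map erase T = G /\ alphaF_ren r0 [] [] C' C0 /\
    coherent (AF C0 [r0] :: T) /\ represents T Γ.

Lemma simulated_nf Γ C' C0 T r0 : alphaF_ren r0 [] [] C' C0 ->
  coherent (AF C0 [r0] :: T) -> represents T Γ -> simulated Γ C' (nf (map erase T)) C0.
Proof.
  intros HA HC HR. pose proof HC as HC'. apply coherent_cons in HC' as (C0' & _ & CT).
  destruct (nf_reannot T CT) as (T' & E' & RT).
  exists T', r0. split; [auto|split; [auto|split]].
  - apply (reannot_app [AF C0 [r0]] [AF C0 [r0]] T T'); auto.
    apply reannot_refl, coherent_single; auto.
  - destruct RT as (_ & B & K). eapply represents_kept; eauto. apply backed_kept; auto.
Qed.

Definition simulable (Γ : list form) (C' : form) : Prop :=
  forall G C0, normal G -> ctx_bvc G -> bvc C0 -> simulated Γ C' G C0 -> ljb nf G C0.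

Lemma ljb_seq_of G C0 : normal G -> ctx_bvc G -> bvc C0 -> ljb_seq G C0.
Proof. split; [|split]; auto. apply ctx_bvc_In; auto. Qed.

Lemma simulable_L Γ As' p ts : In (chain As' (Atom p ts)) Γ ->
  (forall Ai, In Ai As' -> simulable Γ Ai) -> simulable Γ (Atom p ts).
Proof.
  intros Hin IH G C0 HN HB HC0 (T & r0 & <- & HA & CT & HR).
  inversion HA as [l1 l2 p0 ts0 us0 Hts| |]; subst.
  destruct (proj1 HR _ Hin) as (F & r & W & Hv & HaF).
  destruct (alphaF_ren_chain _ _ _ _ HaF) as (As & P & -> & HAs & HP).
  inversion HP as [l1 l2 p1 ts1 us Hts1| |]; subst.
  destruct (coherent_goal_atom _ _ _ _ _ _ _ _ _ CT Hv Hts Hts1) as [-> HW].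
  pose proof Hv as Hva. apply in_ctx_views in Hva as (a & Ha & Hva).
  destruct (in_split _ _ Ha) as (T1 & T2 & ->).
  assert (P : Permutation (a :: T1 ++ T2) (T1 ++ a :: T2)) by apply Permutation_middle.
  assert (HPm : Permutation (map erase (T1 ++ a :: T2)) (erase a :: map erase (T1 ++ T2)))
    by (rewrite !map_app; symmetry; apply Permutation_middle).
  assert (HCa : coherent ([] ++ a :: T1 ++ T2))
    by (apply coherent_cons in CT as (_ & _ & CT); eapply coherent_perm; [symmetry; exact P|auto]).
  destruct (lfocus_of_view a [] (T1 ++ T2) _ _ _ _ HPm Hva HCa) as (T0 & rs & HL & C0 & Irs & Rr & S0).
  apply ljb_L with (As := As) (G0 := map erase T0) (W := W); [apply ljb_seq_of; auto|auto|auto|].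
  intros Ai HAi. destruct (Forall2_In_r _ _ _ _ HAs HAi) as (Ai' & HAi' & HaAi).
  apply (IH Ai' HAi'); [apply nf_spec| | |].
  - apply nf_ctx_bvc. intros B HOB.
    destruct (lfocus_occ _ _ _ _ _ _ HL HOB) as [(? & [] & _)|H1]; auto.
  - eapply bvc_chain; [|eauto]. apply HB. eapply ctx_views_occ; eauto.
  - apply simulated_nf with r.
    + exact HaAi.
    + eapply coherent_add_weaker_In; eauto. intros v; apply free_chain_hyp; auto.
    + eapply represents_same_pairs; [eauto|].
      eapply same_pairs_trans; [apply same_pairs_perm; symmetry; exact P|exact S0].
Qed.

Lemma simulable_Rall Γ x' A'' : (forall B, In B Γ -> ~ free x' B) ->
  simulable Γ A'' -> simulable Γ (All x' A'').
Proof.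
  intros Hfr IH G C0 HN HB HC0 (T & r0 & <- & HA & CT & HR).
  inversion HA as [| |l1 l2 x0 x A0 A HA0]; subst.
  apply ljb_Rall; [apply ljb_seq_of; auto|].
  apply IH; [apply nf_spec| |eapply bvc_all; eauto|].
  - apply nf_ctx_bvc. intros B HOB. apply OccCtx_cons in HOB as [HOB|(? & [] & _)].
    apply OccF_IB_iff in HOB. apply HB; auto.
  - change [IB (bound (All x A)) (map erase T)] with (map erase [AB (bound (All x A)) T]).
    apply simulated_nf with (ren_upd r0 x x').
    + apply (alphaF_ren_bind r0 A'' A [] [] x' x eq_refl HA0).
    + eapply coherent_Rall; eauto.
    + eapply represents_same_pairs; [eauto|apply same_pairs_bracket].
Qed.

Lemma simulable_Rimp Γ A' B' : simulable (A' :: Γ) B' -> simulable Γ (Imp A' B').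
Proof.
  intros IH G C0 HN HB HC0 (T & r0 & <- & HA & CT & HR).
  inversion HA as [|l1 l2 A0 B0 A B HA0 HB0|]; subst.
  destruct (bvc_imp _ _ HC0) as [HbA HbB].
  apply ljb_Rimp; [apply ljb_seq_of; auto|].
  apply IH; [apply nf_spec| |auto|].
  - apply nf_ctx_bvc. intros B1 HOB.
    apply OccCtx_app in HOB as [HOB|(I & [<-|[]] & HO)]; [auto|inversion HO; subst; auto].
  - replace (map erase T ++ [IF A]) with (map erase (T ++ [AF A [r0]])) by apply map_app.
    apply simulated_nf with r0; auto using coherent_Rimp, represents_snoc.
Qed.

Lemma simulable_alpha Γ C' C'' : alpha C' C'' -> simulable Γ C' -> simulable Γ C''.
Proof.
  intros Hal IH G C0 HN HB HC0 (T & r0 & ET & HA & CT & HR).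
  apply IH; auto. exists T, r0. split; [auto|split; [eapply alphaF_ren_comp; eauto|auto]].
Qed.

Lemma simulable_alpha_ctx Γ Γ' C' : Forall2 alpha Γ Γ' -> simulable Γ C' -> simulable Γ' C'.
Proof.
  intros HF IH G C0 HN HB HC0 (T & r0 & ET & HA & CT & HR).
  apply IH; auto. exists T, r0. split; [|split; [|split]]; auto. eapply represents_alpha; eauto.
Qed.

Lemma ljp_simulable Γ C' : ljp Γ C' -> simulable Γ C'.
Proof.
  induction 1; eauto using simulable_L, simulable_Rall, simulable_Rimp,
    simulable_alpha, simulable_alpha_ctx.
Qed.

End Simulation.

Theorem proposition8 (nf : ctx -> ctx) (A : form) :
  nf_strategy nf -> pos A -> bvc A -> ljp [] A -> ljb nf [] A.
Proof.
  intros Hnf _ Hb Hd.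
  apply (ljp_simulable nf Hnf [] A Hd [] A normal_nil); [intros B (? & [] & _)|auto|].
  exists [], (fun v => v). split; [reflexivity|split; [apply alphaF_ren_id|split]].
  - apply coherent_single, coherent_AF_iff. intros u w [<-|[]] [<-|[]] v1 v2 _ _ E. auto.
  - split; [intros _ []|intros ? ? ? []].
Qed.
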